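(* Let $G$ be a connected graph of order $n\geq 2$ and let $g:V(G_1)\to V(G_2)$ be any function, where $G_1,G_2$ are disjoint copies of $G$. Then $$1\leq Dist(F_{G})\leq Dist(G)+1.$$ Moreover, both bounds are sharp: there exist a connected graph $G$ of order at least $2$ and a function $g$ with $Dist(F_G)=1$, and there exist a connected graph $G$ of order at least $2$ and a function $g$ with $Dist(F_G)=Dist(G)+1$.
   Context: All graphs are finite, simple and undirected. A labeling $f:V(H)\to\{1,\dots,t\}$ of a graph $H$ is $t$-distinguishing if the only automorphism of $H$ preserving all vertex labels is the identity. The distinguishing number $Dist(H)$ is the least $t$ such that $H$ has a $t$-distinguishing labeling. Functigraph: let $G_1,G_2$ be disjoint copies of a connected graph $G$ and $g:V(G_1)\to V(G_2)$ a function. The functigraph $F_G$ (which depends on $g$) has vertex set $V(G_1)\cup V(G_2)$ and edge set $E(G_1)\cup E(G_2)\cup\{uv: u\in V(G_1),\ g(u)=v\}$. *)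

From mathcomp Require Import all_boot all_fingroup.
Set Implicit Arguments. Unset Strict Implicit. Unset Printing Implicit Defensive.

Definition simple_graph (T : finType) (e : rel T) : Prop :=
  symmetric e /\ irreflexive e.

Definition connected_graph (T : finType) (e : rel T) : Prop :=
  forall x y : T, connect e x y.

Definition is_aut (T : finType) (e : rel T) (s : {perm T}) : bool :=
  [forall x, forall y, e (s x) (s y) == e x y].

(* f : V -> {0,...,t-1} (labels {1..t} shifted by one) is t-distinguishing *)
Definition distinguishing (T : finType) (e : rel T) (t : nat)
  (f : {ffun T -> 'I_t}) : bool :=
  [forall s : {perm T}, (is_aut e s && [forall x, f (s x) == f x]) ==> (s == 1%g)].

Definition has_dist_labeling (T : finType) (e : rel T) (t : nat) : bool :=
  [exists f : {ffun T -> 'I_t}, distinguishing e f].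

Lemma has_dist_labeling_exists (T : finType) (e : rel T) :
  exists t, has_dist_labeling e t.
Proof.
exists #|T|; apply/existsP; exists [ffun x => enum_rank x].
apply/forallP => s; apply/implyP => /andP [_ /forallP H].
apply/eqP/permP => x; rewrite perm1.
by have /eqP := H x; rewrite !ffunE => /enum_rank_inj.
Qed.

Definition Dist (T : finType) (e : rel T) : nat :=
  ex_minn (has_dist_labeling_exists e).

(* functigraph: vertices inl u (copy G1) and inr v (copy G2) *)
Definition functigraph (T : finType) (e : rel T) (g : T -> T) : rel (T + T) :=
  fun a b =>
    match a, b with
    | inl u, inl v => e u v
    | inr u, inr v => e u v
    | inl u, inr v => g u == v
    | inr v, inl u => g u == v
    end.

From mathcomp Require Import all_boot all_fingroup.
Set Implicit Arguments. Unset Strict Implicit. Unset Printing Implicit Defensive.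

(* The lower bound holds because a labeling of a nonempty graph uses at least one label.
   For the upper bound, extend a distinguishing labeling f of G to F_G by giving the
   vertices of G_2 in the range of g a fresh label and every other vertex its f-label.
   A label-preserving automorphism s cannot send a vertex of G_1 into G_2: its image
   would lie outside the range of g, and then so would the images of all its neighbours
   in G_1, so by connectivity s would map G_1 injectively into G_2 minus the nonempty
   range of g. Hence s restricts to automorphisms of G_1 and G_2. The one on G_1
   preserves f, so it is the identity; as g u is the only neighbour of u in G_2, s then
   fixes the range of g, so the one on G_2 preserves f as well and is the identity too.
   The lower bound is attained by the asymmetric functigraph of the path a - b - c with
   g mapping a, b, c to a, a, b; the upper one by K_2 with g = id, whose functigraph is
   C_4. *)

Section DistinguishingNumber.
Variables (T : finType) (e : rel T).

Lemma is_autP (s : {perm T}) :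
  reflect (forall x y, e (s x) (s y) = e x y) (is_aut e s).
Proof.
apply: (iffP forallP) => [aut_s x y | aut_s x]; last by apply/forallP => y; rewrite aut_s.
by apply/eqP; move/forallP: (aut_s x).
Qed.

Lemma distinguishingP t (f : {ffun T -> 'I_t}) :
  reflect (forall s, is_aut e s -> (forall x, f (s x) = f x) -> s = 1%g)
          (distinguishing e f).
Proof.
apply: (iffP forallP) => [dist_f s aut_s fs | dist_f s].
  by apply/eqP; move/implyP: (dist_f s); apply; rewrite aut_s; apply/forallP => x; rewrite fs.
by apply/implyP => /andP [aut_s /forallP fs]; apply/eqP/dist_f => // x; apply/eqP.
Qed.

Lemma distinguishing_inj t (f : {ffun T -> 'I_t}) : injective f -> distinguishing e f.
Proof.
by move=> f_inj; apply/distinguishingP => s _ fs; apply/permP => x; rewrite perm1; exact: f_inj.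
Qed.

Lemma not_distinguishing_involution t (f : {ffun T -> 'I_t}) (h : T -> T) (x : T) :
  involutive h -> (forall y z, e (h y) (h z) = e y z) -> (forall y, f (h y) = f y) ->
  h x != x -> ~~ distinguishing e f.
Proof.
move=> hK aut_h fh; apply: contra => /distinguishingP dist_f.
have /permP/(_ x) : perm (inv_inj hK) = 1%g.
  by apply: dist_f => [|y]; [apply/is_autP => y z | ]; rewrite !permE.
by rewrite permE perm1 => ->.
Qed.

Lemma has_dist_labeling_widen t t' :
  t <= t' -> has_dist_labeling e t -> has_dist_labeling e t'.
Proof.
move=> le_tt' /existsP [f /distinguishingP dist_f]; apply/existsP.
exists [ffun x => widen_ord le_tt' (f x)]; apply/distinguishingP => s aut_s fs.
by apply: dist_f => // x; apply: val_inj; have := fs x; rewrite !ffunE => /(congr1 val).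
Qed.

Lemma has_dist_labeling_Dist : has_dist_labeling e (Dist e).
Proof. by rewrite /Dist; case: ex_minnP. Qed.

Lemma Dist_min t : has_dist_labeling e t -> Dist e <= t.
Proof. by rewrite /Dist; case: ex_minnP => m _; apply. Qed.

Lemma Dist_gt0 (x : T) : 0 < Dist e.
Proof.
rewrite lt0n; apply: contraTneq has_dist_labeling_Dist => ->.
by apply/existsP => -[f _]; case: (f x).
Qed.

Lemma Dist_le_card : Dist e <= #|T|.
Proof.
apply: Dist_min; apply/existsP; exists [ffun x => enum_rank x].
by apply: distinguishing_inj => x y; rewrite !ffunE => /enum_rank_inj.
Qed.

Lemma Dist_rigid (x : T) : (forall s, is_aut e s -> s = 1%g) -> Dist e = 1.
Proof.
move=> rigid; apply/eqP; rewrite eqn_leq Dist_gt0 // andbT; apply: Dist_min.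
by apply/existsP; exists [ffun _ => ord0]; apply/distinguishingP => s /rigid.
Qed.

End DistinguishingNumber.

Lemma perm_sum_split (S T : finType) (s : {perm S + T}) :
  (forall u, exists w, s (inl u) = inl w) ->
  exists (s1 : {perm S}) (s2 : {perm T}),
    (forall u, s (inl u) = inl (s1 u)) /\ (forall v, s (inr v) = inr (s2 v)).
Proof.
move=> s_inl.
pose s1 u := if s (inl u) is inl w then w else u.
have s1E u : s (inl u) = inl (s1 u) by rewrite /s1; have [w ->] := s_inl u.
have s1_inj : injective s1.
  by move=> u u' eq_s1; have /perm_inj[] : s (inl u) = s (inl u') by rewrite !s1E eq_s1.
have s_inr v : exists w, s (inr v) = inr w.
  case E: (s (inr v)) => [w|w]; last by exists w.
  have /codomP [u def_w] := injF_onto s1_inj w.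
  by have /perm_inj : s (inl u) = s (inr v) by rewrite s1E E def_w.
pose s2 v := if s (inr v) is inr w then w else v.
have s2E v : s (inr v) = inr (s2 v) by rewrite /s2; have [w ->] := s_inr v.
have s2_inj : injective s2.
  by move=> v v' eq_s2; have /perm_inj[] : s (inr v) = s (inr v') by rewrite !s2E eq_s2.
by exists (perm s1_inj), (perm s2_inj); split => ?; rewrite permE.
Qed.

Section FunctigraphLabeling.
Variables (T : finType) (e : rel T) (g : T -> T).
Hypotheses (e_sym : symmetric e) (e_conn : connected_graph e).
Variables (t : nat) (f : {ffun T -> 'I_t}).
Hypothesis f_dist : distinguishing e f.

Definition functigraph_label (x : T + T) : 'I_t.+1 :=
  match x with
  | inl u => lift ord_max (f u)
  | inr v => if v \in codom g then ord_max else lift ord_max (f v)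
  end.

Variable s : {perm T + T}.
Hypothesis s_aut : is_aut (functigraph e g) s.
Hypothesis s_label : forall x, functigraph_label (s x) = functigraph_label x.

Let s_adj x y : functigraph e g (s x) (s y) = functigraph e g x y.
Proof. exact/is_autP. Qed.

Lemma inl_to_inr_notin_codom u w : s (inl u) = inr w -> w \notin codom g.
Proof.
move=> s_u; apply/negP => gw; have := s_label (inl u).
by rewrite s_u /= gw => /eqP; rewrite (negbTE (neq_lift _ _)).
Qed.

Lemma inl_to_inr_adj u u' : e u u' ->
  (exists w, s (inl u) = inr w) -> exists w, s (inl u') = inr w.
Proof.
move=> e_uu' [w s_u]; case s_u': (s (inl u')) => [c|c]; last by exists c.
have := s_adj (inl u) (inl u'); rewrite s_u s_u' /= e_uu' => /eqP gc.
by have := inl_to_inr_notin_codom s_u; rewrite -gc codom_f.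
Qed.

Lemma inl_to_inl u : exists w, s (inl u) = inl w.
Proof.
case s_u: (s (inl u)) => [w|w]; first by exists w.
pose crosses := [pred x | [exists w, s (inl x) == inr w]].
have crossesP x : reflect (exists w, s (inl x) = inr w) (crosses x).
  by apply: (iffP existsP) => -[c /eqP]; exists c.
have crosses_closed : closed e crosses.
  move=> x y e_xy; apply/crossesP/crossesP; first exact: inl_to_inr_adj.
  by apply: inl_to_inr_adj; rewrite e_sym.
have crosses_all x : crosses x.
  have <- : crosses u = crosses x := closed_connect crosses_closed (e_conn u x).
  by apply/crossesP; exists w.
pose h x := if s (inl x) is inr w then w else x.
have hE x : s (inl x) = inr (h x) by rewrite /h; have /crossesP [? ->] := crosses_all x.
have h_inj : injective h.
  by move=> x y eq_h; have /perm_inj[] : s (inl x) = s (inl y) by rewrite !hE eq_h.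
have /codomP [x def_gu] := injF_onto h_inj (g u).
by have := inl_to_inr_notin_codom (hE x); rewrite -def_gu codom_f.
Qed.

Lemma functigraph_label_aut_id : s = 1%g.
Proof.
have f_rigid := elimT (distinguishingP e f) f_dist.
have [s1 [s2 [s1E s2E]]] := perm_sum_split inl_to_inl.
have s1_id : s1 = 1%g.
  apply: f_rigid => [|u].
    by apply/is_autP => u u'; have := s_adj (inl u) (inl u'); rewrite !s1E.
  by apply: (@lift_inj _ ord_max); have := s_label (inl u); rewrite s1E.
have s2_codom v : v \in codom g -> s2 v = v.
  case/codomP => u ->; apply/eqP; rewrite eq_sym.
  by have := s_adj (inl u) (inr (g u)); rewrite s1E s2E s1_id perm1 /= eqxx.
have s2_id : s2 = 1%g.
  apply: f_rigid => [|v].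
    by apply/is_autP => v v'; have := s_adj (inr v) (inr v'); rewrite !s2E.
  have [/s2_codom -> // | gNv] := boolP (v \in codom g).
  have := s_label (inr v); rewrite s2E /= (negbTE gNv).
  case: ifP => [_ /eqP | _ /lift_inj //]; by rewrite (negbTE (neq_lift _ _)).
by apply/permP => -[u|v]; rewrite perm1 ?s1E ?s2E ?s1_id ?s2_id perm1.
Qed.

End FunctigraphLabeling.

Lemma Dist_functigraph_le (T : finType) (e : rel T) (g : T -> T) :
  symmetric e -> connected_graph e -> Dist (functigraph e g) <= Dist e + 1.
Proof.
move=> e_sym e_conn; rewrite addn1; apply: Dist_min.
have /existsP [f f_dist] := has_dist_labeling_Dist e.
apply/existsP; exists [ffun x => functigraph_label g f x]; apply/distinguishingP => s aut_s fs.
by apply: (functigraph_label_aut_id e_sym e_conn f_dist aut_s) => x; have := fs x; rewrite !ffunE.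
Qed.

Definition path3 (x y : option bool) : bool :=
  match x, y with
  | None, Some false | Some false, None | Some false, Some true | Some true, Some false => true
  | _, _ => false
  end.

Definition path3_map (x : option bool) : option bool :=
  if x is Some true then Some false else None.

Lemma simple_path3 : simple_graph path3.
Proof. by split; [case=> [[]|]; case=> [[]|] | case=> [[]|]]. Qed.

Lemma connected_path3 : connected_graph path3.
Proof.
have to_center x : connect path3 x (Some false).
  by case: x => [[]|]; rewrite ?connect0 ?connect1.
have from_center y : connect path3 (Some false) y.
  by case: y => [[]|]; rewrite ?connect0 ?connect1.
by move=> x y; apply: connect_trans (to_center x) (from_center y).
Qed.

(* Exhaustive search over the images of the six vertices, taken in breadth-first order
   from the pendant vertex inr (Some true); a branch is cut as soon as two assigned
   images violate adjacency or injectivity. *)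
Ltac refute_partial_aut s_adj :=
  match goal with
  | Ex : ?s ?x = _, Ey : ?s ?y = _ |- _ =>
      have := s_adj x y; rewrite Ex Ey; discriminate
  | Ex : ?s ?x = ?a, Ey : ?s ?y = ?a |- _ =>
      have /perm_inj := etrans Ex (esym Ey); discriminate
  end.

Lemma functigraph_path3_rigid s : is_aut (functigraph path3 path3_map) s -> s = 1%g.
Proof.
move/is_autP => s_adj.
case E1 : (s (inr (Some true))) => [[[]|]|[[]|]]; try refute_partial_aut s_adj.
all: case E2 : (s (inr (Some false))) => [[[]|]|[[]|]]; try refute_partial_aut s_adj.
all: case E3 : (s (inl (Some true))) => [[[]|]|[[]|]]; try refute_partial_aut s_adj.
all: case E4 : (s (inr None)) => [[[]|]|[[]|]]; try refute_partial_aut s_adj.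
all: case E5 : (s (inl (Some false))) => [[[]|]|[[]|]]; try refute_partial_aut s_adj.
all: case E6 : (s (inl None)) => [[[]|]|[[]|]]; try refute_partial_aut s_adj.
all: by apply/permP => -[[[]|]|[[]|]]; rewrite perm1.
Qed.

Definition K2 (x y : bool) : bool := x != y.

Lemma simple_K2 : simple_graph K2.
Proof. by split; [case; case | case]. Qed.

Lemma connected_K2 : connected_graph K2.
Proof. by move=> x y; case: (eqVneq x y) => [-> | neq_xy]; rewrite ?connect0 ?connect1. Qed.

Lemma ord2_eq_of_neq (i j k : 'I_2) : i != j -> k != j -> i = k.
Proof.
by case: i => [[|[|//]] ?]; case: j => [[|[|//]] ?]; case: k => [[|[|//]] ?] //= *;
  apply: val_inj.
Qed.

(* functigraph K2 id is the 4-cycle a, b, c, d below; for any 2-labeling one of its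
   reflections preserves the labels. *)
Lemma functigraph_K2_no_dist_labeling2 : ~~ has_dist_labeling (functigraph K2 id) 2.
Proof.
apply/existsP => -[f]; apply/negP.
pose a : bool + bool := inl false; pose b : bool + bool := inl true.
pose c : bool + bool := inr true; pose d : bool + bool := inr false.
have [fbd | nfbd] := eqVneq (f b) (f d).
  pose h x := if x == b then d else if x == d then b else x.
  by apply: (not_distinguishing_involution (h := h) (x := b)) => //; do !case.
have [fac | nfac] := eqVneq (f a) (f c).
  pose h x := if x == a then c else if x == c then a else x.
  by apply: (not_distinguishing_involution (h := h) (x := a)) => //; do !case.
have [fab | nfab] := eqVneq (f a) (f b).
  have fcd : f c = f d by apply: (ord2_eq_of_neq (j := f a)); rewrite 1?eq_sym // fab.
  pose h (x : bool + bool) := match x with inl u => inl (~~ u) | inr u => inr (~~ u) end.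
  by apply: (not_distinguishing_involution (h := h) (x := a)) => //; do !case.
have fad : f a = f d by apply: (ord2_eq_of_neq (j := f b)); last rewrite eq_sym.
have fbc : f b = f c by apply: (ord2_eq_of_neq (j := f a)); rewrite eq_sym.
pose h (x : bool + bool) := match x with inl u => inr u | inr u => inl u end.
by apply: (not_distinguishing_involution (h := h) (x := a)) => //; do !case.
Qed.

Lemma Dist_functigraph_K2 : Dist (functigraph K2 id) = Dist K2 + 1.
Proof.
have le_K2 : Dist K2 <= 2 by rewrite -card_bool Dist_le_card.
have gt_C4 : 2 < Dist (functigraph K2 id).
  rewrite ltnNge; apply: contra functigraph_K2_no_dist_labeling2 => le_C4.
  exact: has_dist_labeling_widen le_C4 (has_dist_labeling_Dist _).
have [K2_sym _] := simple_K2.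
apply/eqP; rewrite eqn_leq (Dist_functigraph_le _ K2_sym connected_K2) /=.
by rewrite addn1 (leq_ltn_trans le_K2 gt_C4).
Qed.

Theorem proposition2p1 :
  (forall (T : finType) (e : rel T) (g : T -> T),
      simple_graph e -> connected_graph e -> 2 <= #|T| ->
      1 <= Dist (functigraph e g) <= Dist e + 1)
  /\ (exists (T : finType) (e : rel T) (g : T -> T),
      [/\ simple_graph e, connected_graph e, 2 <= #|T|
        & Dist (functigraph e g) = 1])
  /\ (exists (T : finType) (e : rel T) (g : T -> T),
      [/\ simple_graph e, connected_graph e, 2 <= #|T|
        & Dist (functigraph e g) = Dist e + 1]).
Proof.
split.
  move=> T e g [e_sym _] e_conn /ltnW /card_gt0P [x _].
  by rewrite (Dist_gt0 _ (inl x)) Dist_functigraph_le.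
split.
  exists (option bool), path3, path3_map; split.
  - exact: simple_path3.
  - exact: connected_path3.
  - by rewrite card_option card_bool.
  - exact: Dist_rigid (inl None) functigraph_path3_rigid.
exists bool, K2, id; split.
- exact: simple_K2.
- exact: connected_K2.
- by rewrite card_bool.
- exact: Dist_functigraph_K2.
Qed.
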